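(* Let $\mathfrak{A}$ be a $(\circ,\wedge,\mathsf{A})$-algebra and $\theta$ a representation of $\mathfrak{A}$ by partial functions. If $\theta$ is meet complete, then $\theta$ is join complete.
   Context: A $(\circ,\wedge,\mathsf{A})$-algebra is a set with two binary operations $\circ,\wedge$ and one unary operation $\mathsf{A}$. An algebra of partial functions of this signature is a set of partial functions, with base $X$ the union of all their domains and ranges, closed under: composition $f\circ g=\{(x,z)\mid \exists y\,(x,y)\in f,(y,z)\in g\}$; intersection; antidomain $\mathsf{A}(f)=\{(x,x)\mid x\in X, x\notin\mathrm{dom}(f)\}$. A representation by partial functions is an isomorphism onto such an algebra. The order on $\mathfrak{A}$ is $a\le b\iff a\wedge b=a$. A representation $\theta$ is meet complete if for every nonempty $S\subseteq\mathfrak{A}$ such that $\bigwedge S$ exists, $\theta(\bigwedge S)=\bigcap\theta[S]$; it is join complete if for every $S\subseteq\mathfrak{A}$ such that $\bigvee S$ exists, $\theta(\bigvee S)=\bigcup\theta[S]$. *)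

Record CMAAlg := {
  carrier :> Type;
  comp : carrier -> carrier -> carrier;
  meet : carrier -> carrier -> carrier;
  antidom : carrier -> carrier
}.

Definition functional {X : Type} (R : X -> X -> Prop) : Prop :=
  forall x y z, R x y -> R x z -> y = z.

Definition rel_eq {X : Type} (R S : X -> X -> Prop) : Prop :=
  forall x y, R x y <-> S x y.

(** theta : A -> partial functions on the base X is a representation by partial
    functions: each theta a is a partial function, theta is injective, X is the
    union of all domains and ranges, and theta is a homomorphism for
    composition (diagrammatic: first f then g), intersection and antidomain. *)
Definition is_pfun_representation (A : CMAAlg) {X : Type}
  (theta : A -> X -> X -> Prop) : Prop :=
  (forall a, functional (theta a)) /\
  (forall a b, rel_eq (theta a) (theta b) -> a = b) /\
  (forall x : X, exists a, (exists y, theta a x y) \/ (exists y, theta a y x)) /\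
  (forall a b, rel_eq (theta (comp A a b))
                      (fun x z => exists y, theta a x y /\ theta b y z)) /\
  (forall a b, rel_eq (theta (meet A a b))
                      (fun x y => theta a x y /\ theta b x y)) /\
  (forall a, rel_eq (theta (antidom A a))
                    (fun x y => x = y /\ ~ (exists z, theta a x z))).

Definition alg_le (A : CMAAlg) (a b : A) : Prop := meet A a b = a.

Definition is_glb (A : CMAAlg) (S : A -> Prop) (m : A) : Prop :=
  (forall s, S s -> alg_le A m s) /\
  (forall l, (forall s, S s -> alg_le A l s) -> alg_le A l m).

Definition is_lub (A : CMAAlg) (S : A -> Prop) (j : A) : Prop :=
  (forall s, S s -> alg_le A s j) /\
  (forall u, (forall s, S s -> alg_le A s u) -> alg_le A j u).

Definition meet_complete (A : CMAAlg) {X : Type} (theta : A -> X -> X -> Prop)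
  : Prop :=
  forall (S : A -> Prop) (m : A), (exists s, S s) -> is_glb A S m ->
    rel_eq (theta m) (fun x y => forall s, S s -> theta s x y).

Definition join_complete (A : CMAAlg) {X : Type} (theta : A -> X -> X -> Prop)
  : Prop :=
  forall (S : A -> Prop) (j : A), is_lub A S j ->
    rel_eq (theta j) (fun x y => exists s, S s /\ theta s x y).

(** If [j] is the join of [S] and some pair [(x,y)] of [theta j] lies in no
    [theta s], then, [theta j] being functional, [x] lies outside the domain of
    every [s].  Restricting [j] away from the domain of each [s] gives a family
    whose meet is the empty element: a lower bound [l] has a domain disjoint
    from every [s], so [A(l);j] is an upper bound of [S], whence [l <= j <= A(l);j]
    forces [l] to be empty.  Meet completeness then puts [(x,y)] in the empty
    relation. *)

From Stdlib Require Import Classical.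

Section PartialFunctionRepresentation.

Variables (A : CMAAlg) (X : Type) (theta : A -> X -> X -> Prop).
Hypothesis theta_repr : is_pfun_representation A theta.

Lemma alg_le_theta (a b : A) :
  alg_le A a b <-> (forall x y, theta a x y -> theta b x y).
Proof.
  destruct theta_repr as (_ & theta_inj & _ & _ & theta_meet & _).
  unfold rel_eq in theta_meet. split.
  - intros Hab x y Hxy. unfold alg_le in Hab. rewrite <- Hab in Hxy.
    apply theta_meet in Hxy. tauto.
  - intros Hsub. apply theta_inj. intros x y. rewrite theta_meet.
    split; [tauto | auto].
Qed.

Lemma theta_mono (a b : A) (x y : X) :
  alg_le A a b -> theta a x y -> theta b x y.
Proof. intros Hab. now apply alg_le_theta. Qed.

Lemma theta_restrict (a b : A) (x y : X) :
  theta (comp A (antidom A a) b) x y <-> theta b x y /\ ~ (exists z, theta a x z).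
Proof.
  destruct theta_repr as (_ & _ & _ & theta_comp & _ & theta_antidom).
  unfold rel_eq in theta_comp, theta_antidom. rewrite theta_comp. split.
  - intros [w [Haw Hbw]]. apply theta_antidom in Haw. destruct Haw as [<- Hdom].
    auto.
  - intros [Hb Hdom]. exists x. split; auto. apply theta_antidom. auto.
Qed.

Lemma theta_restrict_self (a : A) (x y : X) :
  ~ theta (comp A (antidom A a) a) x y.
Proof.
  rewrite theta_restrict. intros [Ha Hdom]. eauto.
Qed.

Lemma empty_alg_le (m l : A) :
  (forall x y, ~ theta m x y) -> alg_le A m l.
Proof.
  intros Hm. apply alg_le_theta. intros x y Hxy. exfalso. exact (Hm x y Hxy).
Qed.

Definition restrictions_of_join (S : A -> Prop) (j : A) (c : A) : Prop :=
  c = j \/ exists s, S s /\ c = comp A (antidom A s) j.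

Lemma restrictions_of_join_glb (S : A -> Prop) (j : A) :
  is_lub A S j ->
  is_glb A (restrictions_of_join S j) (comp A (antidom A j) j).
Proof.
  intros [j_ub j_least]. split.
  - intros c _. apply empty_alg_le, theta_restrict_self.
  - intros l l_lower. apply empty_alg_le. intros p q Hl.
    assert (l_le_j : alg_le A l j) by (apply l_lower; left; reflexivity).
    assert (j_le : alg_le A j (comp A (antidom A l) j)).
    { apply j_least. intros s Hs. apply alg_le_theta. intros u v Hs_uv.
      apply theta_restrict. split.
      - now apply (theta_mono s j u v (j_ub s Hs)).
      - intros [z Hl_uz].
        assert (l_le_s : alg_le A l (comp A (antidom A s) j))
          by (apply l_lower; right; eauto).
        apply (theta_mono _ _ _ _ l_le_s), theta_restrict in Hl_uz.
        destruct Hl_uz as [_ Hdom]. eauto. }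
    pose proof (theta_mono _ _ _ _ j_le (theta_mono _ _ _ _ l_le_j Hl)) as Hrestr.
    apply theta_restrict in Hrestr as [_ Hdom]. eauto.
Qed.

End PartialFunctionRepresentation.

Theorem mainTheorem2 (A : CMAAlg) (X : Type) (theta : A -> X -> X -> Prop) :
  is_pfun_representation A theta ->
  meet_complete A theta -> join_complete A theta.
Proof.
  intros theta_repr theta_meet_complete S j j_lub x y. split.
  2:{ intros [s [Hs Hsxy]].
      exact (theta_mono A X theta theta_repr s j x y (proj1 j_lub s Hs) Hsxy). }
  intros Hj. apply NNPP. intros Hnone.
  apply (theta_restrict_self A X theta theta_repr j x y).
  apply (theta_meet_complete (restrictions_of_join A S j)).
  - exists j. left. reflexivity.
  - exact (restrictions_of_join_glb A X theta theta_repr S j j_lub).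
  - intros c [-> | [s [Hs ->]]]; auto.
    apply (theta_restrict A X theta theta_repr). split; auto.
    intros [z Hs_xz]. apply Hnone. exists s. split; auto.
    assert (Hj_xz : theta j x z)
      by exact (theta_mono A X theta theta_repr s j x z (proj1 j_lub s Hs) Hs_xz).
    destruct theta_repr as [theta_functional _].
    now rewrite (theta_functional j x y z Hj Hj_xz).
Qed.
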